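(* Let $R$ be an absolutely integrally closed ring, $D$ an integral domain, and $\varphi: R\to D$ an integral ring homomorphism. Then $\varphi$ is surjective and $D$ is an absolutely integrally closed domain.
   Context: All rings are commutative with $1$ and ring maps preserve $1$. An integral domain $A$ is absolutely integrally closed if $A$ is integrally closed in its field of fractions $K$ and $K$ is algebraically closed. A ring $R$ is absolutely integrally closed if $R\cong A_1\times\cdots\times A_n$ for finitely many absolutely integrally closed domains $A_1,\dots,A_n$. A ring map $\varphi: R\to D$ is integral if every element of $D$ is integral over $\varphi(R)$. *)

From HB Require Import structures.
From mathcomp Require Import all_boot all_order all_algebra.
Set Implicit Arguments. Unset Strict Implicit. Unset Printing Implicit Defensive.
Import GRing.Theory.
Local Open Scope ring_scope.

Definition integrally_closed_in_frac (A : idomainType) : Prop :=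
  forall x : {fraction A}, integralOver (@tofrac A) x -> exists a : A, x = tofrac a.

Definition aic_domain (A : idomainType) : Prop :=
  integrally_closed_in_frac A /\ GRing.closed_field_axiom {fraction A}.

(* R ~= A_1 x ... x A_n, expressed via the projections f_i : R -> A_i such
   that the induced map R -> prod_i A_i is a bijection. *)
Definition aic_ring (R : comNzRingType) : Prop :=
  exists (n : nat) (A : 'I_n -> idomainType) (f : forall i, {rmorphism R -> A i}),
    [/\ forall i, aic_domain (A i),
        (forall x y : R, (forall i, f i x = f i y) -> x = y) &
        (forall a : forall i, A i, exists x : R, forall i, f i x = a i)].

Definition integral_map (R D : comNzRingType) (phi : {rmorphism R -> D}) : Prop :=
  integralRange phi.

(* Let R = A_1 x ... x A_n with every A_i an absolutely integrally closed
   (a.i.c.) domain, and phi : R -> D an integral ring map to a domain.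
   1. A domain is a.i.c. iff it satisfies the closed-field axiom (every monic
      polynomial of positive degree has a root): roots in the fraction field
      of monic polynomials over A are integral over A, and conversely roots in
      the fraction field are obtained by clearing denominators.  Over such a
      domain monic polynomials split into linear factors.
   2. As D is a domain, phi sends one primitive idempotent of R to 1, hence
      vanishes on the kernel of the projection g : R -> A_j onto that factor.
   3. Splitting over A_j the image under g of an integral equation of d in D,
      and lifting its roots to R, shows that d lies in phi(R).
   4. Then D inherits the closed-field axiom from A_j, hence is a.i.c. by 1. *)
From HB Require Import structures.
From mathcomp Require Import all_boot all_order all_algebra.
Set Implicit Arguments. Unset Strict Implicit. Unset Printing Implicit Defensive.
Local Open Scope ring_scope.
Import GRing.Theory.

Lemma map_prod_XsubC (R S : nzRingType) (g : {rmorphism R -> S}) (rs : seq R) :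
  map_poly g (\prod_(r <- rs) ('X - r%:P)) = \prod_(s <- map g rs) ('X - s%:P).
Proof.
rewrite rmorph_prod big_map; apply: eq_bigr => r _; exact: map_polyXsubC.
Qed.

Lemma choice_section (T : choiceType) (U : eqType) (h : T -> U) :
  (forall u, exists t, h t = u) -> exists s : U -> T, cancel s h.
Proof.
move=> h_surj; have h_surjb u : exists t, h t == u.
  by have [t <-] := h_surj u; exists t.
by exists (fun u => xchoose (h_surjb u)) => u; apply/eqP/(xchooseP (h_surjb u)).
Qed.

Section ClosedDomain.
Variable A : idomainType.
Hypothesis closedA : GRing.closed_field_axiom A.

(* A nonconstant monic polynomial over A has a root in A: this is the
   closed-field axiom read on the coefficients of the polynomial. *)
Lemma closed_monic_root (p : {poly A}) :
  p \is monic -> (1 < size p)%N -> exists a, root p a.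
Proof.
move=> monic_p size_p; pose n := (size p).-1.
have n_gt0 : (0 < n)%N by rewrite /n -subn1 subn_gt0.
have size_pE : size p = n.+1 by rewrite /n prednK // ltnW.
have [a Ha] := closedA (fun i => - p`_i) n_gt0.
exists a; rewrite /root horner_coef size_pE big_ord_recr /=.
have -> : p`_n = 1 by rewrite -(monicP monic_p) lead_coefE.
by rewrite mul1r Ha -big_split /= big1 // => i _; rewrite mulNr addrN.
Qed.

Lemma closed_monic_split (p : {poly A}) :
  p \is monic -> exists rs : seq A, p = \prod_(a <- rs) ('X - a%:P).
Proof.
have [m] := ubnP (size p); elim: m p => // m IH p size_p monic_p.
have [size_p_le1|size_p_gt1] := leqP (size p) 1.
  have size_p1 : size p = 1%N.
    by apply/eqP; rewrite eqn_leq size_p_le1 lt0n size_poly_eq0 monic_neq0.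
  exists [::]; rewrite big_nil (size1_polyC size_p_le1).
  have coef0 : p`_0 = 1 by rewrite -(monicP monic_p) lead_coefE size_p1.
  by rewrite coef0.
have [a root_a] := closed_monic_root monic_p size_p_gt1.
have [q p_eq] := factor_theorem p a root_a.
have monic_q : q \is monic by rewrite -(monicMr q (monicXsubC a)) -p_eq.
have size_q : (size q < m)%N.
  move: size_p; rewrite p_eq size_Mmonic ?monicXsubC ?monic_neq0 //.
  by rewrite size_XsubC addn2.
have [rs q_eq] := IH q size_q monic_q.
by exists (a :: rs); rewrite p_eq q_eq big_cons mulrC.
Qed.

Lemma closed_monic_image_root (B : idomainType) (g : {rmorphism A -> B})
    (p : {poly A}) (b : B) :
  p \is monic -> root (map_poly g p) b -> exists a, g a = b.
Proof.
move=> /closed_monic_split [rs ->].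
by rewrite map_prod_XsubC root_prod_XsubC => /mapP [a _ ->]; exists a.
Qed.
End ClosedDomain.

Lemma frac_repr (D : idomainType) (x : {fraction D}) :
  exists a b : D, b != 0 /\ x * tofrac b = tofrac a.
Proof.
exists (\n_(repr x)), (\d_(repr x)); split; first exact: denom_ratioP.
rewrite -{1}[x]reprK; set r := repr x; unlock FracField.tofrac.
rewrite -[X in X = _](FracField.pi_mul r (Ratio \d_r 1)).
apply/eqmodP; rewrite /= FracField.equivfE /FracField.mulf /=.
have d_neq0 := denom_ratioP r.
by rewrite !numden_Ratio ?mulf_neq0 ?oner_neq0 // !mulr1 mulrC.
Qed.

Lemma common_denominator (D : idomainType) (m : nat) (P : nat -> {fraction D}) :
  exists (c : D) (d : nat -> D),
    c != 0 /\ forall i, (i < m)%N -> tofrac c * P i = tofrac (d i).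
Proof.
elim: m => [|k [c [d [c_neq0 Hd]]]].
  by exists 1, (fun=> 0); split; rewrite ?oner_neq0.
have [a [b [b_neq0 Hab]]] := frac_repr (P k).
exists (c * b), (fun i => if i == k then c * a else d i * b).
split=> [|i]; first by rewrite mulf_neq0.
rewrite ltnS leq_eqVlt => /predU1P [->|i_lt_k]; rewrite ?eqxx.
  by rewrite !rmorphM /= -mulrA [_ * P k]mulrC Hab.
by rewrite ltn_eqF // !rmorphM /= mulrAC Hd.
Qed.

Lemma rescaled_root (K : fieldType) (m : nat) (P : nat -> K) (c y : K) :
  c != 0 -> y ^+ m = \sum_(i < m) c * P i * c ^+ (m - i.+1) * y ^+ i ->
  (y / c) ^+ m = \sum_(i < m) P i * (y / c) ^+ i.
Proof.
move=> c_neq0 Hy; apply: (mulIf (expf_neq0 m c_neq0)).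
rewrite -exprMn divfK // Hy mulr_suml; apply: eq_bigr => i _.
have -> : c ^+ m = c ^+ i * c * c ^+ (m - i.+1).
  by rewrite -exprSr -exprD subnKC // ltn_ord.
rewrite exprMn exprVn -!mulrA mulKf ?expf_neq0 //.
by rewrite mulrCA [y ^+ i * _]mulrC !mulrA.
Qed.

(* The fraction field of a domain satisfying the closed-field axiom is
   algebraically closed: clear denominators, solve in D, rescale. *)
Lemma frac_closed (D : idomainType) :
  GRing.closed_field_axiom D -> GRing.closed_field_axiom {fraction D}.
Proof.
move=> closedD m P m_gt0.
have [c [d [c_neq0 Hd]]] := common_denominator m P.
have [y Hy] := closedD m (fun i => d i * c ^+ (m - i.+1)) m_gt0.
exists (tofrac y / tofrac c); apply: rescaled_root; first by rewrite tofrac_eq0.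
rewrite -rmorphXn Hy rmorph_sum; apply: eq_bigr => i _.
by rewrite !rmorphM !rmorphXn /= Hd.
Qed.

(* An absolutely integrally closed domain satisfies the closed-field axiom:
   a root in the fraction field is integral over A, hence lies in A. *)
Lemma aic_domain_closed (A : idomainType) :
  aic_domain A -> GRing.closed_field_axiom A.
Proof.
case=> [int_closed frac_closedA] n P n_gt0.
have [x Hx] := frac_closedA n (fun i => tofrac (P i)) n_gt0.
pose q : {poly A} := 'X^n - \poly_(i < n) P i.
have monic_q : q \is monic.
  rewrite monicE /q lead_coefDl ?lead_coefXn // size_polyXn size_polyN ltnS.
  exact: size_poly.
have [a x_eq] : exists a, x = tofrac a.
  apply: int_closed; exists q => //.
  rewrite /root /q poly_def rmorphB /= map_polyXn rmorph_sum /=.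
  rewrite hornerD hornerN hornerXn horner_sum Hx subr_eq0; apply/eqP.
  by apply: eq_bigr => i _; rewrite map_polyZ /= map_polyXn hornerZ hornerXn.
exists a; apply/eqP; rewrite -tofrac_eq rmorphXn /= -x_eq Hx rmorph_sum /=.
by apply/eqP/eq_bigr => i _; rewrite rmorphM rmorphXn /= x_eq.
Qed.

Lemma closed_aic_domain (D : idomainType) :
  GRing.closed_field_axiom D -> aic_domain D.
Proof.
move=> closedD; split; last exact: frac_closed.
move=> x [p monic_p root_x].
have [a <-] := closed_monic_image_root closedD monic_p root_x.
by exists a.
Qed.

Section ProductDecomposition.
Variables (R : comNzRingType) (n : nat) (A : 'I_n -> idomainType).
Variable f : forall i, {rmorphism R -> A i}.
Hypothesis f_inj : forall x y : R, (forall i, f i x = f i y) -> x = y.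
Hypothesis f_surj :
  forall a : forall i, A i, exists x : R, forall i, f i x = a i.

Lemma component_surjective j (b : A j) : exists x, f j x = b.
Proof.
have [x Hx] := f_surj (dfwith (fun k => 0 : A k) b).
by exists x; rewrite Hx dfwith_in.
Qed.

Lemma primitive_idempotents :
  exists e : 'I_n -> R, forall i k, f k (e i) = (k == i)%:R.
Proof.
apply: (@fin_all_exists _ (fun=> R)
  (fun i x => forall k, f k x = (k == i)%:R)).
by move=> i; have [x Hx] := f_surj (fun k => (k == i)%:R); exists x.
Qed.

(* A ring map to a domain kills all but one factor: it sends some primitive
   idempotent to 1, the others to 0, so it factors through one projection. *)
Lemma component_kernel (D : idomainType) (phi : {rmorphism R -> D}) :
  exists j, forall x, f j x = 0 -> phi x = 0.
Proof.
have [e He] := primitive_idempotents.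
have sum_e : \sum_i e i = 1.
  apply: f_inj => k; rewrite rmorph_sum rmorph1 (bigD1 k) //= He eqxx big1.
    by rewrite addr0.
  by move=> i /negbTE i_neq_k; rewrite He eq_sym i_neq_k.
have [j phi_ej] : exists j, phi (e j) != 0.
  apply/existsP; apply: contraT; rewrite negb_exists => /forallP phi_e0.
  rewrite -(oner_eq0 D) -(rmorph1 phi) -sum_e rmorph_sum big1 // => i _.
  exact/eqP/negPn/phi_e0.
have e_idem : e j * e j = e j.
  apply: f_inj => k; rewrite rmorphM He.
  by case: (k == j); rewrite ?mulr1 ?mulr0.
have phi_ej1 : phi (e j) = 1.
  by apply: (mulfI phi_ej); rewrite -rmorphM e_idem mulr1.
exists j => x fx0.
have xe0 : x * e j = 0.
  apply: f_inj => k; rewrite rmorphM He rmorph0.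
  by have [->|] := eqVneq k j; rewrite ?fx0 ?mul0r ?mulr0.
by rewrite -[phi x]mulr1 -phi_ej1 -rmorphM xe0 rmorph0.
Qed.
End ProductDecomposition.

Section KernelTransfer.
Variables (R : comNzRingType) (A D : idomainType).
Variables (g : {rmorphism R -> A}) (phi : {rmorphism R -> D}).
Hypothesis closedA : GRing.closed_field_axiom A.
Hypothesis g_surj : forall a, exists x, g x = a.
Hypothesis ker_g_phi : forall x, g x = 0 -> phi x = 0.

Lemma fibre_transfer x y : g x = g y -> phi x = phi y.
Proof.
move=> gxy; apply/eqP; rewrite -subr_eq0 -rmorphB ker_g_phi //.
by rewrite rmorphB gxy subrr.
Qed.

Lemma map_poly_transfer (p q : {poly R}) :
  map_poly g p = map_poly g q -> map_poly phi p = map_poly phi q.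
Proof.
move=> gpq; apply/polyP => i; rewrite !coef_map; apply: fibre_transfer.
by rewrite -!coef_map gpq.
Qed.

(* If phi is integral, it is surjective: the image under g of an integral
   equation splits over A; lifting its roots to R splits the image under phi
   of the equation, whose roots are thus in the image of phi. *)
Lemma integral_transfer_surjective :
  integralRange phi -> forall d, exists r, phi r = d.
Proof.
move=> phi_int d; have [p monic_p root_d] := phi_int d.
have [rs split_p] := closed_monic_split closedA (monic_map g monic_p).
have [s sK] := choice_section g_surj.
have lift_rs : map g (map s rs) = rs by rewrite -map_comp (eq_map sK) map_id.
have phi_p :
    map_poly phi p = map_poly phi (\prod_(r <- map s rs) ('X - r%:P)).
  by apply: map_poly_transfer; rewrite split_p map_prod_XsubC lift_rs.
move: root_d; rewrite phi_p map_prod_XsubC root_prod_XsubC.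
by case/mapP => r _ ->; exists r.
Qed.

(* If phi is surjective, D inherits the closed-field axiom from A: solve the
   equation lifted to A and map the solution back down through phi. *)
Lemma surjective_transfer_closed :
  (forall d, exists r, phi r = d) -> GRing.closed_field_axiom D.
Proof.
move=> phi_surj m P m_gt0.
have [s sK] := choice_section phi_surj; have [t tK] := choice_section g_surj.
have [a Ha] := closedA (fun i => g (s (P i))) m_gt0.
have lifted_eq : g (t a ^+ m) = g (\sum_(i < m) s (P i) * t a ^+ i).
  rewrite rmorphXn tK Ha rmorph_sum; apply: eq_bigr => i _.
  by rewrite rmorphM rmorphXn tK.
exists (phi (t a)); rewrite -rmorphXn (fibre_transfer lifted_eq) rmorph_sum.
by apply: eq_bigr => i _; rewrite rmorphM rmorphXn sK.
Qed.
End KernelTransfer.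

Theorem mainTheorem19 (R : comNzRingType) (D : idomainType)
  (phi : {rmorphism R -> D}) :
  aic_ring R -> integral_map phi ->
  (forall d : D, exists r : R, phi r = d) /\ aic_domain D.
Proof.
case=> n [A [f [aicA f_inj f_surj]]] phi_int.
have [j ker_fj_phi] := component_kernel f_inj f_surj phi.
have closedAj := aic_domain_closed (aicA j).
have fj_surj := component_surjective f_surj (j := j).
have phi_surj :=
  integral_transfer_surjective closedAj fj_surj ker_fj_phi phi_int.
split=> //; apply: closed_aic_domain.
exact: surjective_transfer_closed closedAj fj_surj ker_fj_phi phi_surj.
Qed.
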